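(* Suppose $D\subset\mathbb{R}^d$ is a $\kappa$-fat open set with localization constant $R_0$ and $\dim_{\rm A}(\partial D)<d$, and let $\gamma:=d-\dim_{\rm A}(\partial D)$. For any $q\in[0,\gamma)$ there exists $C=C(q)>0$ such that $$m_d\big(\{y\in B(x,r)\cap\overline D:\delta_D(y)<s\}\big)\le Cs^q(s\vee r)^{d-q}\quad\text{for all }x\in\overline D\text{ and }r,s>0.$$
   Context: $m_d$ is $d$-dimensional Lebesgue measure; $\delta_D(x)=\mathrm{dist}(x,\partial D)$. For nonempty $E\subset\mathbb{R}^d$, $\dim_{\rm A}(E)$ is the infimum of all $\lambda>0$ for which there is $C$ such that for all $x\in E$ and $0<s\le r<\mathrm{diam}(E)$, $B(x,r)\cap E$ can be covered by at most $C(r/s)^\lambda$ open balls of radius $s$ centered in $E$. For $\kappa\in(0,1)$, $D$ open is $\kappa$-fat with localization constant $R_0\in(0,\mathrm{diam}(D)]$ if for every $x\in\overline D$ and $r\in(0,R_0)$ there is $z\in D$ with $B(z,\kappa r)\subset D\cap B(x,r)$. *)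

From HB Require Import structures.
From mathcomp Require Import all_boot all_order all_algebra.
From mathcomp Require Import all_classical all_reals all_analysis.
Set Implicit Arguments. Unset Strict Implicit. Unset Printing Implicit Defensive.
Import Order.TTheory GRing.Theory Num.Theory.
Import numFieldNormedType.Exports.
Local Open Scope classical_set_scope.
Local Open Scope ring_scope.

Section Defs.
Variables (R : realType) (d : nat).
Notation V := 'rV[R]_d.

Definition edist (x y : V) : R :=
  Num.sqrt (\sum_(i < d) (x ord0 i - y ord0 i) ^+ 2).

Definition eball (x : V) (r : R) : set V := [set y | edist x y < r].

(* diameter (extended real, +oo for unbounded sets, -oo for the empty set) *)
Definition ediam (E : set V) : \bar R :=
  ereal_sup [set (edist x y)%:E | x in E & y in E].

Definition bdry (D : set V) : set V := closure D `\` interior D.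

(* delta_D(y) = dist(y, boundary D) (+oo if the boundary is empty) *)
Definition delta (D : set V) (y : V) : \bar R :=
  ereal_inf [set (edist y z)%:E | z in bdry D].

Definition assouad_cover (E : set V) (lam : R) : Prop :=
  exists C : R, forall x, E x -> forall s r : R, 0 < s -> s <= r ->
    (r%:E < ediam E)%E ->
    exists c : seq V, (forall z, z \in c -> E z) /\
      (size c)%:R <= C * powR (r / s) lam /\
      eball x r `&` E `<=` \bigcup_(z in [set z | z \in c]) eball z s.

Definition assouad_dim (E : set V) : \bar R :=
  ereal_inf [set lam%:E | lam in [set lam : R | 0 < lam /\ assouad_cover E lam]].

Definition kappa_fat (kappa R0 : R) (D : set V) : Prop :=
  open D /\ 0 < kappa < 1 /\ 0 < R0 /\ (R0%:E <= ediam D)%E /\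
  forall x, closure D x -> forall r, 0 < r -> r < R0 ->
    exists z, D z /\ eball z (kappa * r) `<=` D `&` eball x r.

Definition box (a b : V) : set V :=
  [set y | forall i, a ord0 i <= y ord0 i <= b ord0 i].
Definition boxvol (a b : V) : R := \prod_(i < d) (b ord0 i - a ord0 i).

Definition leb_measure (A : set V) : \bar R :=
  ereal_inf [set v | exists a b : nat -> V,
     (forall k i, a k ord0 i <= b k ord0 i) /\
     A `<=` \bigcup_k box (a k) (b k) /\
     v = (\sum_(0 <= k <oo) (boxvol (a k) (b k))%:E)%E].
End Defs.

From Pilot Require Import Defs.
From HB Require Import structures.
From mathcomp Require Import all_boot all_order all_algebra.
From mathcomp Require Import all_classical all_reals all_analysis.
From mathcomp Require Import ring lra.
Import Order.TTheory GRing.Theory Num.Theory.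
Import numFieldNormedType.Exports.
Local Open Scope classical_set_scope.
Local Open Scope ring_scope.

(* Choose lam with dim_A(bdry D) < lam < d - q.  Every point y of the set on the left lies
   within s of a boundary point, and all these boundary points lie in the ball of radius
   4 max(s, r) around a single one of them.  Covering the boundary inside that ball by
   K (4 max(s, r) / s)^lam balls of radius s, the concentric balls of radius 2s (hence cubes
   of side 4s) cover the set, so its measure is at most
   K (4 max(s, r) / s)^lam (4 s)^d <= C s^q max(s, r)^(d - q), as lam <= d - q.
   The Assouad condition only constrains radii below diam(bdry D); larger radii are reduced
   to it through a fixed finite net of the compact boundary at scale diam(bdry D) / 2. *)

Section SumsOfSquares.
Variables (R : rcfType) (n : nat).
Implicit Types a b : 'I_n -> R.

Lemma sumr_sqr_ge0 a : 0 <= \sum_i a i ^+ 2.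
Proof. by apply: sumr_ge0 => i _; exact: sqr_ge0. Qed.

Lemma lagrange_identity a b :
  ((\sum_i a i ^+ 2) * (\sum_i b i ^+ 2) - (\sum_i a i * b i) ^+ 2) *+ 2 =
  \sum_i \sum_j (a i * b j - a j * b i) ^+ 2.
Proof.
rewrite [RHS](eq_bigr (fun i => \sum_j a i ^+ 2 * b j ^+ 2 +
    \sum_j a j ^+ 2 * b i ^+ 2 - (\sum_j a i * b i * (a j * b j)) *+ 2)); last first.
  by move=> i _; rewrite -sumrMnl -big_split -sumrB; apply: eq_bigr => j _ /=; ring.
rewrite sumrB big_split /= sumrMnl [X in _ + X - _]exchange_big /=.
by rewrite expr2 !big_distrlr mulrnBl -mulr2n.
Qed.

Lemma cauchy_schwarz a b :
  \sum_i a i * b i <= Num.sqrt (\sum_i a i ^+ 2) * Num.sqrt (\sum_i b i ^+ 2).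
Proof.
rewrite -sqrtrM ?sumr_sqr_ge0 // (le_trans (ler_norm _)) // -sqrtr_sqr ler_sqrt.
  rewrite -subr_ge0 -(pmulrn_lge0 _ (ltn0Sn 1)) lagrange_identity.
  by apply: sumr_ge0 => i _; exact: sumr_sqr_ge0.
by rewrite mulr_ge0 ?sumr_sqr_ge0.
Qed.

Lemma minkowski_sumr_sqr a b :
  Num.sqrt (\sum_i (a i + b i) ^+ 2) <=
  Num.sqrt (\sum_i a i ^+ 2) + Num.sqrt (\sum_i b i ^+ 2).
Proof.
rewrite -[X in _ <= X]ger0_norm ?addr_ge0 ?sqrtr_ge0 // -sqrtr_sqr ler_sqrt ?sqr_ge0 //.
rewrite sqrrD !sqr_sqrtr ?sumr_sqr_ge0 //.
have -> : \sum_i (a i + b i) ^+ 2 =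
    \sum_i a i ^+ 2 + (\sum_i a i * b i) *+ 2 + \sum_i b i ^+ 2.
  by rewrite -sumrMnl -!big_split /=; apply: eq_bigr => i _; ring.
by rewrite lerD2r lerD2l lerMn2r cauchy_schwarz.
Qed.

End SumsOfSquares.

Section PowR.
Variable R : realType.
Implicit Types a r s t lam q : R.

Lemma powR_ge1 a r : 1 <= a -> 0 <= r -> 1 <= powR a r.
Proof. by move=> a_ge1 r_ge0; rewrite -(powRr0 a) ler_powR. Qed.

Lemma powR_ratio_le (n : nat) s t lam q :
  0 < s -> s <= t -> 0 <= lam -> lam <= n%:R - q ->
  powR (t / s) lam * s ^+ n <= powR s q * powR t (n%:R - q).
Proof.
move=> s_gt0 st lam_ge0 lam_le.
have t_gt0 : 0 < t by exact: lt_le_trans st.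
have ts_ge1 : 1 <= t / s by rewrite ler_pdivlMr // mul1r.
apply: le_trans (ler_wpM2r (exprn_ge0 _ (ltW s_gt0)) (ler_powR ts_ge1 lam_le)) _.
rewrite -(powR_mulrn _ (ltW s_gt0)) -[in powR s n%:R](subrK q n%:R).
rewrite (@powRD _ s); last by apply/implyP => _; rewrite gt_eqF.
rewrite mulrA -powRM ?divr_ge0 ?(ltW s_gt0) ?(ltW t_gt0) //.
by rewrite divfK ?gt_eqF // mulrC.
Qed.

End PowR.

Section EuclideanSpace.
Set Implicit Arguments. Unset Strict Implicit.
Variables (R : realType) (d : nat).
Notation V := 'rV[R]_d.
Local Notation edist := (@Defs.edist R d).
Implicit Types x y z : V.
Local Notation eballs c s := (\bigcup_(z in [set z | z \in c]) eball z s).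

Lemma edistC x y : edist x y = edist y x.
Proof. by rewrite /Defs.edist; congr Num.sqrt; apply: eq_bigr => i _; rewrite -sqrrN opprB. Qed.

Lemma edistxx x : edist x x = 0.
Proof. by rewrite /Defs.edist big1 ?sqrtr0 // => i _; rewrite subrr expr0n. Qed.

Lemma edist_triangle x y z : edist x z <= edist x y + edist y z.
Proof.
rewrite /Defs.edist (eq_bigr (fun i => ((x ord0 i - y ord0 i) + (y ord0 i - z ord0 i)) ^+ 2)).
  exact: minkowski_sumr_sqr.
by move=> i _; rewrite addrA subrK.
Qed.

Lemma coord_le_edist x y i : `|x ord0 i - y ord0 i| <= edist x y.
Proof.
rewrite /Defs.edist -sqrtr_sqr ler_sqrt ?sumr_sqr_ge0 // (bigD1 i) //= lerDl.
by apply: sumr_ge0 => j _; exact: sqr_ge0.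
Qed.

Lemma edist_le_coord x y (e : R) : 0 <= e ->
  (forall i, `|x ord0 i - y ord0 i| <= e) -> edist x y <= d%:R * e.
Proof.
move=> e_ge0 le_e.
rewrite /Defs.edist -[X in _ <= X]ger0_norm ?mulr_ge0 // -sqrtr_sqr ler_sqrt ?sqr_ge0 //.
apply: (@le_trans _ _ (\sum_(i < d) e ^+ 2)).
  by apply: ler_sum => i _; rewrite -real_normK ?num_real // lerXn2r ?nnegrE.
rewrite sumr_const card_ord exprMn -[_ *+ d]mulr_natl; apply: ler_wpM2r; first exact: sqr_ge0.
by rewrite -natrX ler_nat; case: d => // n; rewrite leq_pmulr.
Qed.

Lemma eball_open x r : open (eball x r).
Proof.
rewrite openE => y /= xy; apply/nbhs_ballP.
have gap : 0 < r - edist x y by rewrite subr_gt0.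
exists ((r - edist x y) / d.+1%:R) => [|z]; first exact: divr_gt0.
rewrite mx_norm_ball /= => yz; rewrite /eball /=.
have coord_yz i : `|y ord0 i - z ord0 i| <= (r - edist x y) / d.+1%:R.
  apply: le_trans (ltW yz); rewrite -[X in _ <= X]/(mx_norm (y - z)) mx_normrE.
  by apply: le_trans (le_bigmax _ _ (ord0, i)); rewrite !mxE.
have := @edist_le_coord y z _ (divr_ge0 (ltW gap) (ler0n _ _)) coord_yz.
have shrink : d%:R * ((r - edist x y) / d.+1%:R) < r - edist x y.
  by rewrite mulrA ltr_pdivrMr ?ltr0n // mulrC ltr_pM2l // ltr_nat.
move=> /le_lt_trans /(_ shrink) yz_lt; have := edist_triangle x y z; lra.
Qed.

Lemma ediam_ge_edist (E : set V) x y : E x -> E y -> ((edist x y)%:E <= ediam E)%E.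
Proof. by move=> Ex Ey; apply: ereal_sup_ubound; exists x => //; exists y. Qed.

Lemma eball_sub_cube z (t : R) : eball z t `<=` box (z - const_mx t) (z + const_mx t).
Proof.
move=> y /= zy i; rewrite !mxE.
by have := le_lt_trans (coord_le_edist z y i) zy; rewrite ltr_norml; lra.
Qed.

Lemma boxvol_cube z (t : R) : boxvol (z - const_mx t) (z + const_mx t) = (2 * t) ^+ d.
Proof.
by rewrite /boxvol (eq_bigr (fun=> 2 * t)) ?prodr_const ?card_ord // => i _; rewrite !mxE; ring.
Qed.

Lemma leb_measure_le (A B : set V) : A `<=` B -> (leb_measure A <= leb_measure B)%E.
Proof.
move=> AB; apply: ereal_inf_le_tmp => _ [a [b [ab [Bab ->]]]].
by exists a, b; split; [|split; [exact: subset_trans Bab|]].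
Qed.

Lemma leb_measure_eballs (c : seq V) (t : R) : (0 < d)%N -> 0 <= t ->
  (leb_measure (eballs c t) <= ((size c)%:R * (2 * t) ^+ d)%:E)%E.
Proof.
move=> d_gt0 t_ge0.
(* The cover is padded by degenerate boxes, of volume 0 ^+ d = 0 as d > 0. *)
pose rad k := if (k < size c)%N then t else 0.
have rad_ge0 k : 0 <= rad k by rewrite /rad; case: ifP.
pose a k := nth 0 c k - const_mx (rad k); pose b k := nth 0 c k + const_mx (rad k).
have vol_ab k : boxvol (a k) (b k) = (2 * rad k) ^+ d by exact: boxvol_cube.
apply: (@le_trans _ _ (\sum_(0 <= k <oo) (boxvol (a k) (b k))%:E)%E).
  apply: ereal_inf_lbound; exists a, b; split; [|split] => //.
    by move=> k i; rewrite !mxE lerD2l (le_trans _ (rad_ge0 k)) // oppr_le0.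
  move=> y [z /= zc /eball_sub_cube zy]; exists (index z c) => //.
  by rewrite /a /b /rad index_mem zc nth_index.
rewrite (nneseries_split_cond 0 (size c)) => [|k _]; last first.
  by rewrite vol_ab lee_fin exprn_ge0 ?mulr_ge0 ?rad_ge0.
rewrite eseries0 => [|k /= ck _]; last first.
  by rewrite vol_ab /rad ltnNge ck mulr0 expr0n gtn_eqF.
rewrite adde0 add0n sumEFin lee_fin (@eq_big_nat _ _ _ _ _ _ (fun=> (2 * t) ^+ d)).
  by rewrite sumr_const_nat subn0 -[_ *+ size c]mulr_natl.
by move=> k /andP[_ kc]; rewrite vol_ab /rad kc.
Qed.

Lemma closed_bounded_finite_net (E : set V) (c : V) (M e : R) : 0 < e -> closed E ->
  (forall z, E z -> edist c z <= M) ->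
  exists W : seq V, (forall w, w \in W -> E w) /\ E `<=` eballs W e.
Proof.
move=> e_gt0 closedE boundedE.
have : compact E.
  apply: (subclosed_compact closedE
    (@rV_compact _ _ (fun i => `[c ord0 i - M, c ord0 i + M]%classic) _)) => [i|z /boundedE cz i].
    exact: segment_compact.
  by rewrite /= in_itv /=; have := le_trans (coord_le_edist c z i) cz; rewrite ler_norml; lra.
rewrite compact_cover => /(_ V E (fun w => eball w e)) [w _|z Ez|W WE coverE].
- exact: eball_open.
- by exists z => //; rewrite /eball /= edistxx.
exists (finmap.enum_fset W); split => [w wW|z /coverE[w wW zw]]; last by exists w.
by rewrite -in_setE; apply: WE.
Qed.

Lemma bdry_closed (D : set V) : closed (bdry D).
Proof.
rewrite /bdry setDE; apply: closedI; first exact: closed_closure.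
by rewrite closedC; exact: open_interior.
Qed.

Lemma delta_lt (D : set V) y (s : R) :
  (delta D y < s%:E)%E -> exists2 w, bdry D w & edist y w < s.
Proof. by case/ereal_inf_lt => _ [w Dw <-]; rewrite lte_fin; exists w. Qed.

Lemma eballs_bigcup (T : eqType) (W : seq T) (A : T -> set V) (N s : R) :
  (forall w, w \in W -> exists c : seq V, (size c)%:R <= N /\ A w `<=` eballs c s) ->
  exists c : seq V, (size c)%:R <= (size W)%:R * N /\
    \bigcup_(w in [set w | w \in W]) A w `<=` eballs c s.
Proof.
elim: W => [|w W IH] coverA; first by exists [::]; split; [rewrite mul0r | move=> y []].
have [c1 [c1N c1A]] := coverA w (mem_head w W).
have [c2 [c2N c2A]] : exists c, (size c)%:R <= (size W)%:R * N /\
    \bigcup_(v in [set v | v \in W]) A v `<=` eballs c s.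
  by apply: IH => v vW; apply: coverA; rewrite inE vW orbT.
exists (c1 ++ c2); split.
  by rewrite size_cat natrD /= -natr1 mulrDl mul1r addrC lerD.
move=> y [v /=]; rewrite inE => /predU1P[-> /c1A | vW Avy].
  by case=> z zc1 zy; exists z; rewrite //= mem_cat zc1.
have [z zc2 zy] := c2A y (ex_intro2 _ _ v vW Avy).
by exists z; rewrite //= mem_cat zc2 orbT.
Qed.

Lemma assouad_dim_lt (E : set V) (a : R) :
  (assouad_dim E < a%:E)%E -> exists2 lam, 0 < lam < a & assouad_cover E lam.
Proof.
case/ereal_inf_lt => _ [lam [lam_gt0 coverE] <-]; rewrite lte_fin => lam_lt.
by exists lam; rewrite ?lam_gt0.
Qed.

Lemma assouad_cover_below_diam (E : set V) (lam : R) : 0 <= lam -> assouad_cover E lam ->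
  exists2 K, 1 <= K & forall w, E w -> forall r s t : R, 0 < s -> s <= t -> r <= t ->
    (r%:E < ediam E)%E ->
    exists c : seq V, (size c)%:R <= K * powR (t / s) lam /\ eball w r `&` E `<=` eballs c s.
Proof.
move=> lam_ge0 [C coverC]; exists (Num.max C 1); first by rewrite le_max lexx orbT.
move=> w Ew r s t s_gt0 st rt r_lt_diam.
have [sr|rs] := leP s r.
  have [c [_ [cC coverc]]] := coverC w Ew s r s_gt0 sr r_lt_diam.
  have C_le : C <= Num.max C 1 by rewrite le_max lexx.
  exists c; split => //; apply: (le_trans cC); apply: le_trans (ler_wpM2r (powR_ge0 _ _) C_le) _.
  apply: ler_wpM2l; first by rewrite le_max ler01 orbT.
  by apply: ge0_ler_powR; rewrite ?nnegrE ?divr_ge0 ?ler_pM2r ?invr_gt0 //; lra.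
exists [:: w]; split; first by rewrite mulr_ege1 ?le_max ?lexx ?orbT ?powR_ge1 ?ler_pdivlMr ?mul1r.
by move=> y [wy _]; exists w; rewrite /= ?mem_head // /eball /= (lt_trans wy rs).
Qed.

Lemma ediam_half_net (E : set V) : closed E ->
  exists W : seq V, (forall w, w \in W -> E w) /\
    forall dl : R, ediam E = dl%:E -> 0 < dl -> E `<=` eballs W (dl / 2).
Proof.
move=> closedE.
have [[z0 Ez0 [dl Edl dl_gt0]]|nonpos] :=
  pselect (exists2 z0, E z0 & exists2 dl : R, ediam E = dl%:E & 0 < dl); last first.
  exists [::]; split => // dl Edl dl_gt0 z Ez.
  by exfalso; apply: nonpos; exists z => //; exists dl.
have bounded z : E z -> edist z0 z <= dl.
  by move=> Ez; rewrite -lee_fin -Edl ediam_ge_edist.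
have [W [WE coverW]] :=
  closed_bounded_finite_net (divr_gt0 dl_gt0 (ltr0Sn _ 1)) closedE bounded.
by exists W; split => // dl'; rewrite Edl => -[<-].
Qed.

(* The covering condition of [assouad_cover], at every scale and not only below diam E. *)
Definition uniform_cover (E : set V) (K lam : R) :=
  forall w, E w -> forall s t : R, 0 < s -> s <= t ->
    exists c : seq V, (size c)%:R <= K * powR (t / s) lam /\ eball w t `&` E `<=` eballs c s.

Lemma uniform_cover_of_assouad (E : set V) (lam : R) : closed E -> 0 <= lam ->
  assouad_cover E lam -> exists2 K, 0 < K & uniform_cover E K lam.
Proof.
move=> closedE lam_ge0 /(assouad_cover_below_diam lam_ge0)[K K_ge1 coverK].
have [W [WE netW]] := ediam_half_net closedE.
have WK_ge1 : 1 <= ((size W)%:R + 1) * K by rewrite mulr_ege1 // lerDr.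
exists (((size W)%:R + 1) * K) => [|w Ew s t s_gt0 st]; first exact: lt_le_trans WK_ge1.
have [t_lt_diam|diam_le_t] := ltP t%:E (ediam E).
  have [c [cK coverc]] := coverK w Ew t s t s_gt0 st (lexx t) t_lt_diam.
  exists c; split => //; apply: (le_trans cK); rewrite ler_wpM2r ?powR_ge0 //.
  by rewrite ler_peMl ?lerDr // (le_trans ler01).
have := ediam_ge_edist Ew Ew; rewrite edistxx.
case Edl: (ediam E) diam_le_t => [dl| |] //; rewrite !lee_fin => dl_le_t dl_ge0.
have [dl_gt0|dl_le0] := ltP 0 dl.
  have [|c [cK coverc]] :=
    @eballs_bigcup _ W (fun v => eball v (dl / 2) `&` E) (K * powR (t / s) lam) s.
    move=> v vW; apply: coverK (WE v vW) _ _ _ s_gt0 st _ _; first lra.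
    by rewrite Edl lte_fin; lra.
  exists c; split.
    apply: (le_trans cK); rewrite mulrA ler_wpM2r ?powR_ge0 // ler_wpM2r ?lerDl //.
    exact: le_trans ler01 K_ge1.
  move=> y [_ Ey]; apply: coverc; have [v vW yv] := netW dl Edl dl_gt0 y Ey.
  by exists v.
exists [:: w]; split; first by rewrite mulr_ege1 ?powR_ge1 ?ler_pdivlMr ?mul1r.
move=> y [_ Ey]; exists w; rewrite /= ?mem_head // /eball /=.
by have := ediam_ge_edist Ew Ey; rewrite Edl lee_fin; lra.
Qed.

Lemma leb_measure_near_le (E : set V) (K lam : R) x (r s : R) : (0 < d)%N -> 0 <= K ->
  uniform_cover E K lam -> 0 < r -> 0 < s ->
  (leb_measure [set y | eball x r y /\ exists2 w, E w & (edist y w < s)%R] <=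
    (K * powR (4 * Num.max s r / s) lam * (4 * s) ^+ d)%:E)%E.
Proof.
move=> d_gt0 K_ge0 coverE r_gt0 s_gt0.
set rho := Num.max s r; set S := [set y | _].
have [s_le_rho r_le_rho] : s <= rho /\ r <= rho by rewrite !le_max !lexx orbT.
have [[y0 [xy0 [w0 Ew0 y0w0]]]|noS] := pselect (exists y, S y); last first.
  have S0 : S `<=` eballs [::] 0 by move=> y Sy; exfalso; apply: noS; exists y.
  apply: le_trans (leb_measure_le S0) _; apply: le_trans (leb_measure_eballs _ d_gt0 (lexx 0)) _.
  by rewrite mul0r lee_fin !mulr_ge0 ?powR_ge0 ?exprn_ge0 ?mulr_ge0 // ltW.
have s_le_4rho : s <= 4 * rho by lra.
have [c [cK coverc]] := coverE w0 Ew0 s (4 * rho) s_gt0 s_le_4rho.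
have S_cover : S `<=` eballs c (2 * s).
  move=> y [xy [w Ew yw]].
  have w0w : edist w0 w < 4 * rho.
    have := edist_triangle w0 y0 w; have := edist_triangle y0 x w; have := edist_triangle x y w.
    rewrite (edistC w0 y0) (edistC y0 x) /eball /= in xy0 xy *; lra.
  have [z zc zw] := coverc w (conj w0w Ew); exists z => //.
  by have := edist_triangle z w y; rewrite /eball /= (edistC w y) in zw *; lra.
apply: le_trans (leb_measure_le S_cover) _; apply: le_trans (leb_measure_eballs _ d_gt0 _) _.
  by rewrite mulr_ge0 // ltW.
rewrite lee_fin (_ : 2 * (2 * s) = 4 * s); last by ring.
by rewrite ler_wpM2r ?exprn_ge0 ?mulr_ge0 // ltW.
Qed.

End EuclideanSpace.

Theorem proposition2p4 (R : realType) (d : nat) (D : set 'rV[R]_d)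
    (kappa R0 : R) :
  (0 < d)%N ->
  kappa_fat kappa R0 D ->
  (assouad_dim (bdry D) < (d%:R : R)%:E)%E ->
  forall q : R, 0 <= q ->
    (q%:E < (d%:R : R)%:E - assouad_dim (bdry D))%E ->
  exists C : R, 0 < C /\
    forall (x : 'rV[R]_d), closure D x -> forall r s : R, 0 < r -> 0 < s ->
      (leb_measure [set y | eball x r y /\ closure D y /\ (delta D y < s%:E)%E]
        <= (C * powR s q * powR (Num.max s r) (d%:R - q))%:E)%E.
Proof.
move=> d_gt0 _ dim_lt q _ q_lt.
have [lam /andP[lam_gt0 lam_lt] coverE] :
    exists2 lam, 0 < lam < d%:R - q & assouad_cover (bdry D) lam.
  apply: assouad_dim_lt; move: q_lt dim_lt.
  by case: (assouad_dim (bdry D)) => [a||] //=; rewrite ?ltNyr // -EFinB !lte_fin; lra.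
have [K K_gt0 uniformE] := uniform_cover_of_assouad (@bdry_closed _ _ D) (ltW lam_gt0) coverE.
exists (K * powR 4 lam * 4 ^+ d); split; first by rewrite !mulr_gt0 ?powR_gt0 ?exprn_gt0.
move=> x _ r s r_gt0 s_gt0; set rho := Num.max s r.
have s_le_rho : s <= rho by rewrite le_max lexx.
apply: le_trans (leb_measure_le _)
  (le_trans (leb_measure_near_le x d_gt0 (ltW K_gt0) uniformE r_gt0 s_gt0) _).
  by move=> y [xy [_ /delta_lt]].
have rho_gt0 : 0 < rho := lt_le_trans s_gt0 s_le_rho.
have -> : K * powR (4 * rho / s) lam * (4 * s) ^+ d =
    K * powR 4 lam * 4 ^+ d * (powR (rho / s) lam * s ^+ d).
  by rewrite -[4 * rho / s]mulrA powRM ?divr_ge0 ?(ltW rho_gt0) ?(ltW s_gt0) // exprMn; ring.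
rewrite lee_fin -[_ * powR s q * _]mulrA ler_wpM2l ?powR_ratio_le ?(ltW lam_gt0) ?(ltW lam_lt) //.
by rewrite !mulr_ge0 ?powR_ge0 ?exprn_ge0 ?(ltW K_gt0).
Qed.
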